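(* Let $(\mathfrak{g},[\cdot,\cdot]_{\mathfrak{g}},\phi_{\mathfrak{g}})$ be a finite-dimensional weakly involutive Hom-Lie algebra and $r\in\mathfrak g\otimes\mathfrak g$ with $\phi_{\mathfrak g}r^\sharp=r^\sharp\phi_{\mathfrak g}^*$. Let $[\cdot,\cdot]_{\mathfrak g^*}$ be defined by $\langle[a,b]_{\mathfrak g^*},x\rangle=\langle\Delta(x),a\otimes b\rangle$ where $\Delta(x)=(\mathrm{ad}_x\otimes\phi_{\mathfrak g}+\phi_{\mathfrak g}\otimes\mathrm{ad}_x)r$. Then for all $a,b\in\mathfrak g^*$, $[r^\sharp\phi_{\mathfrak g}^*(a),r^\sharp\phi_{\mathfrak g}^*(b)]_{\mathfrak g}-r^\sharp\phi_{\mathfrak g}^*[a,b]_{\mathfrak g^*}=[r,r]_{\mathfrak g}(a,b)$.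
   Context: A Hom-Lie algebra $(\mathfrak{g},[\cdot,\cdot]_{\mathfrak{g}},\phi_{\mathfrak{g}})$: skew-symmetric bilinear bracket and linear map with $\phi_{\mathfrak g}[x,y]=[\phi_{\mathfrak g}x,\phi_{\mathfrak g}y]$ and $[\phi_{\mathfrak g}(x),[y,z]]+[\phi_{\mathfrak g}(y),[z,x]]+[\phi_{\mathfrak g}(z),[x,y]]=0$; weakly involutive if $[\phi_{\mathfrak g}^2(x),y]=[x,y]$. $\mathrm{ad}_xy=[x,y]_{\mathfrak g}$. $r^\sharp:\mathfrak g^*\to\mathfrak g$, $\langle r^\sharp(a),b\rangle=\langle r,a\otimes b\rangle$. For $r=\sum_ix_i\otimes y_i$, $[r,r]_{\mathfrak g}=\sum_{i,j}\big([x_i,x_j]_{\mathfrak g}\otimes\phi_{\mathfrak g}(y_i)\otimes\phi_{\mathfrak g}(y_j)+\phi_{\mathfrak g}(x_i)\otimes[y_i,x_j]_{\mathfrak g}\otimes\phi_{\mathfrak g}(y_j)+\phi_{\mathfrak g}(x_i)\otimes\phi_{\mathfrak g}(x_j)\otimes[y_i,y_j]_{\mathfrak g}\big)\in\mathfrak g^{\otimes3}$, and $[r,r]_{\mathfrak g}(a,b)\in\mathfrak g$ is the element with $\langle[r,r]_{\mathfrak g}(a,b),c\rangle=\langle[r,r]_{\mathfrak g},a\otimes b\otimes c\rangle$ for all $c\in\mathfrak g^*$. *)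

(* A finite-dimensional vector space g over a field K is
   modelled as K^n = 'rV[K]_n; its dual g^* is also modelled as 'rV[K]_n
   with the canonical pairing <a, x> = \sum_i a_i x_i.
   Tensors in g (x) g are finite sums \sum_i x_i (x) y_i (sequences of pairs),
   tensors in g^{(x)3} finite sums of x (x) y (x) z (sequences of triples). *)
From HB Require Import structures.
From mathcomp Require Import all_boot all_order all_algebra.
Set Implicit Arguments. Unset Strict Implicit. Unset Printing Implicit Defensive.
Import Order.TTheory GRing.Theory Num.Theory.
Local Open Scope ring_scope.

Section Defs.
Variables (K : fieldType) (n : nat).
Notation vec := 'rV[K]_n.

Definition pair (a x : vec) : K := \sum_(i < n) a 0 i * x 0 i.

Definition evec (j : 'I_n) : vec := delta_mx 0 j.

Definition is_HomLie (br : vec -> vec -> vec) (phi : vec -> vec) : Prop :=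
  [/\ (forall (c : K) x y z, br (c *: x + y) z = c *: br x z + br y z),
      (forall (c : K) x y z, br x (c *: y + z) = c *: br x y + br x z),
      (forall x y, br x y = - br y x) &
      (forall (c : K) x y, phi (c *: x + y) = c *: phi x + phi y)] /\
  (forall x y, phi (br x y) = br (phi x) (phi y)) /\
  (forall x y z, br (phi x) (br y z) + br (phi y) (br z x)
                 + br (phi z) (br x y) = 0).

Definition weakly_involutive (br : vec -> vec -> vec) (phi : vec -> vec) : Prop :=
  forall x y, br (phi (phi x)) y = br x y.

(* dual map phi^* : g^* -> g^*, <phi^*(a), x> = <a, phi x> *)
Definition dualmap (phi : vec -> vec) (a : vec) : vec :=
  \row_j pair a (phi (evec j)).

Definition rsharp (r : seq (vec * vec)) (a : vec) : vec :=
  \sum_(p <- r) pair a p.1 *: p.2.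

(* [a,b]_{g^*} : <[a,b], x> = <Delta(x), a (x) b>,
   Delta(x) = (ad_x (x) phi + phi (x) ad_x) r *)
Definition Delta_pair (br : vec -> vec -> vec) (phi : vec -> vec)
    (r : seq (vec * vec)) (x a b : vec) : K :=
  \sum_(p <- r) (pair a (br x p.1) * pair b (phi p.2)
                 + pair a (phi p.1) * pair b (br x p.2)).

Definition dualbr (br : vec -> vec -> vec) (phi : vec -> vec)
    (r : seq (vec * vec)) (a b : vec) : vec :=
  \row_j Delta_pair br phi r (evec j) a b.

Definition rr (br : vec -> vec -> vec) (phi : vec -> vec)
    (r : seq (vec * vec)) : seq (vec * vec * vec) :=
  flatten [seq [:: (br p.1 q.1, phi p.2, phi q.2);
                   (phi p.1, br p.2 q.1, phi q.2);
                   (phi p.1, phi q.1, br p.2 q.2)] | p <- r, q <- r].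

Definition contr2 (T : seq (vec * vec * vec)) (a b : vec) : vec :=
  \sum_(t <- T) (pair a t.1.1 * pair b t.1.2) *: t.2.

End Defs.

(* By bilinearity,
   [r^sharp phi^* a, r^sharp phi^* b] = \sum_(i,j) <a, phi x_i> <b, phi x_j> [y_i, y_j],
   which is the third summand of [r,r](a,b).  The compatibility
   phi r^sharp = r^sharp phi^* turns r^sharp phi^* [a,b] into
   \sum_j <Delta(x_j), a (x) b> phi y_j, and skew-symmetry of the bracket
   identifies its negative with the first two summands of [r,r](a,b). *)
From HB Require Import structures.
From mathcomp Require Import all_boot all_order all_algebra.
From mathcomp Require Import ring.
Set Implicit Arguments. Unset Strict Implicit. Unset Printing Implicit Defensive.
Import Order.TTheory GRing.Theory Num.Theory.
Local Open Scope ring_scope.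

Section LinearAxiom.
Variables (R : pzRingType) (U V : lmodType R) (f : U -> V).
Hypothesis f_lin : forall c x y, f (c *: x + y) = c *: f x + f y.

Lemma lin_axiom0 : f 0 = 0.
Proof.
have := f_lin 1 0 0; rewrite scaler0 addr0 scale1r.
by move/(congr1 (fun v => v - f 0)); rewrite addrK subrr.
Qed.

Lemma lin_axiomD : {morph f : x y / x + y}.
Proof. by move=> x y; rewrite -[x in LHS]scale1r f_lin scale1r. Qed.

Lemma lin_axiomZ c x : f (c *: x) = c *: f x.
Proof. by rewrite -[_ *: _]addr0 f_lin lin_axiom0 addr0. Qed.

End LinearAxiom.

Section Pairing.
Variables (K : fieldType) (n : nat).
Notation vec := 'rV[K]_n.

Lemma pairD (a x y : vec) : pair a (x + y) = pair a x + pair a y.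
Proof. by rewrite /pair -big_split; apply: eq_bigr => i _; rewrite mxE mulrDr. Qed.

Lemma pairZ (a x : vec) (c : K) : pair a (c *: x) = c * pair a x.
Proof. by rewrite /pair mulr_sumr; apply: eq_bigr => i _; rewrite mxE mulrCA. Qed.

Lemma pairN (a x : vec) : pair a (- x) = - pair a x.
Proof. by rewrite -scaleN1r pairZ mulN1r. Qed.

Lemma pair_row_linear (g : vec -> K) :
  (forall c x y, g (c *: x + y) = c * g x + g y) ->
  forall z, pair (\row_j g (evec K j)) z = g z.
Proof.
move=> g_lin z.
have g0 : g 0 = 0 := lin_axiom0 (V := K^o) g_lin.
rewrite {2}(row_sum_delta z) (big_morph g (lin_axiomD (V := K^o) g_lin) g0).
by apply: eq_bigr => j _; rewrite mxE (lin_axiomZ (V := K^o) g_lin) mulrC.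
Qed.

End Pairing.

Section RsharpExpansion.
Variables (K : fieldType) (n : nat).
Notation vec := 'rV[K]_n.
Variables (br : vec -> vec -> vec) (phi : vec -> vec) (r : seq (vec * vec)).
Hypothesis brl : forall (c : K) x y z, br (c *: x + y) z = c *: br x z + br y z.
Hypothesis brr : forall (c : K) x y z, br x (c *: y + z) = c *: br x y + br x z.
Hypothesis phi_lin : forall (c : K) x y, phi (c *: x + y) = c *: phi x + phi y.

Lemma pair_dualmap (c z : vec) : pair (dualmap phi c) z = pair c (phi z).
Proof.
rewrite /dualmap (@pair_row_linear _ _ (fun z => pair c (phi z))) // => k x y.
by rewrite phi_lin pairD pairZ.
Qed.

Lemma pair_dualbr (a b x : vec) :
  pair (dualbr br phi r a b) x = Delta_pair br phi r x a b.
Proof.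
rewrite /dualbr (@pair_row_linear _ _ (fun x => Delta_pair br phi r x a b)) // => k x1 x2.
rewrite /Delta_pair mulr_sumr -big_split /=; apply: eq_bigr => p _.
rewrite !brl !pairD !pairZ; ring.
Qed.

Lemma phi_rsharp (c : vec) :
  phi (rsharp r c) = \sum_(q <- r) pair c q.1 *: phi q.2.
Proof.
rewrite /rsharp (big_morph phi (lin_axiomD phi_lin) (lin_axiom0 phi_lin)).
by apply: eq_bigr => q _; rewrite (lin_axiomZ phi_lin).
Qed.

Lemma br_rsharp (c d : vec) :
  br (rsharp r c) (rsharp r d)
  = \sum_(p <- r) \sum_(q <- r) (pair c p.1 * pair d q.1) *: br p.2 q.2.
Proof.
have brl' y := lin_axiomD (fun c x z => brl c x z y).
have brr' x := lin_axiomD (brr^~ x).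
rewrite /rsharp (big_morph _ (brl' _) (lin_axiom0 (fun c x z => brl c x z _))).
apply: eq_bigr => p _.
rewrite (lin_axiomZ (fun c x z => brl c x z _)).
rewrite (big_morph _ (brr' _) (lin_axiom0 (brr^~ _))) scaler_sumr.
by apply: eq_bigr => q _; rewrite (lin_axiomZ (brr^~ _)) scalerA.
Qed.

Hypothesis br_skew : forall x y, br x y = - br y x.

Lemma Delta_pair_skew (x a b : vec) :
  Delta_pair br phi r x a b
  = - \sum_(p <- r) (pair a (br p.1 x) * pair b (phi p.2)
                     + pair a (phi p.1) * pair b (br p.2 x)).
Proof.
rewrite -sumrN; apply: eq_bigr => p _.
by rewrite (br_skew x p.1) (br_skew x p.2) !pairN mulNr mulrN opprD.
Qed.

Lemma contr2_rr (a b : vec) :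
  contr2 (rr br phi r) a b =
    \sum_(p <- r) \sum_(q <- r)
      ((pair a (br p.1 q.1) * pair b (phi p.2)
        + pair a (phi p.1) * pair b (br p.2 q.1)) *: phi q.2)
  + \sum_(p <- r) \sum_(q <- r) (pair a (phi p.1) * pair b (phi q.1)) *: br p.2 q.2.
Proof.
rewrite /contr2 /rr big_flatten /= big_allpairs_dep /= -big_split /=.
apply: eq_bigr => p _; rewrite -big_split /=; apply: eq_bigr => q _.
by rewrite !big_cons big_nil /= addr0 addrA scalerDl.
Qed.

Hypothesis phi_rsharp_comm : forall a, phi (rsharp r a) = rsharp r (dualmap phi a).

Lemma rsharp_dualmap_dualbr (a b : vec) :
  rsharp r (dualmap phi (dualbr br phi r a b))
  = \sum_(q <- r) Delta_pair br phi r q.1 a b *: phi q.2.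
Proof. by rewrite -phi_rsharp_comm phi_rsharp; under eq_bigr do rewrite pair_dualbr. Qed.

End RsharpExpansion.

Theorem lemma4p9 (K : fieldType) (n : nat)
    (br : 'rV[K]_n -> 'rV[K]_n -> 'rV[K]_n) (phi : 'rV[K]_n -> 'rV[K]_n)
    (r : seq ('rV[K]_n * 'rV[K]_n)) :
  is_HomLie br phi -> weakly_involutive br phi ->
  (forall a, phi (rsharp r a) = rsharp r (dualmap phi a)) ->
  forall a b : 'rV[K]_n,
    br (rsharp r (dualmap phi a)) (rsharp r (dualmap phi b))
      - rsharp r (dualmap phi (dualbr br phi r a b))
    = contr2 (rr br phi r) a b.
Proof.
move=> [[brl brr br_skew phi_lin] _] _ phi_rsharp_comm a b.
rewrite br_rsharp // rsharp_dualmap_dualbr // contr2_rr addrC.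
congr (_ + _).
- rewrite exchange_big /= -sumrN; apply: eq_bigr => q _.
  by rewrite Delta_pair_skew // scaleNr opprK scaler_suml.
- apply: eq_bigr => p _; apply: eq_bigr => q _.
  by rewrite !pair_dualmap.
Qed.
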